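(* Let $T\in(\mathbb{C}^n)^{\otimes3}$ be an $r$-diagonalisable symmetric tensor, $T=\sum_{i=1}^ru_i^{\otimes3}$ with $u_1,\dots,u_r$ linearly independent. Let $P\in\mathbb{C}^{n\times r}$ be a semi-unitary matrix whose columns span $\mathrm{span}\{u_1,\dots,u_r\}$, and let $T'=(\overline P\otimes\overline P\otimes\overline P).T\in(\mathbb{C}^r)^{\otimes3}$. Then $T'$ is diagonalisable and $\kappa(T)=\kappa(T')$.
   Context: A symmetric tensor is $r$-diagonalisable if it equals $\sum_{i=1}^r u_i^{\otimes3}$ with the $u_i$ linearly independent (diagonalisable when $r$ equals the ambient dimension). $\kappa(T)=\|U\|_F^2+\|U^\dagger\|_F^2$, where $U$ has rows $u_1,\dots,u_r$ and $U^\dagger$ is the Moore–Penrose pseudoinverse; this does not depend on the decomposition. $P$ semi-unitary means $P^*P=I_r$; $\overline P$ is the entrywise complex conjugate. For $A\in\mathbb{C}^{n\times r}$, $\big((A\otimes A\otimes A).T\big)_{i_1i_2i_3}=\sum_{j_1,j_2,j_3}A_{j_1i_1}A_{j_2i_2}A_{j_3i_3}T_{j_1j_2j_3}$, so $(\overline P\otimes\overline P\otimes\overline P).(u^{\otimes3})=(P^*u)^{\otimes3}$. *)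

(* Complex numbers are modelled as R[i] for R : realType
   (mathcomp-real-closed `complex`), which is (isomorphic to) C. *)
From mathcomp Require Import all_boot all_algebra.
From mathcomp Require Import reals.
From mathcomp.real_closed Require Export complex.
Set Implicit Arguments.
Unset Strict Implicit.
Unset Printing Implicit Defensive.
Import GRing.Theory Num.Theory.
Local Open Scope ring_scope.

Definition tensor3 (C : Type) (n : nat) := 'I_n -> 'I_n -> 'I_n -> C.

Section Defs.
Variable C : numClosedFieldType.

Definition ctmx (m n : nat) (A : 'M[C]_(m, n)) : 'M[C]_(n, m) :=
  (map_mx Num.conj A)^T.

Definition frob2 (m n : nat) (A : 'M[C]_(m, n)) : C :=
  \sum_(i < m) \sum_(j < n) `|A i j| ^+ 2.

Definition is_pinv (m n : nat) (A : 'M[C]_(m, n)) (X : 'M[C]_(n, m)) : Prop :=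
  [/\ A *m X *m A = A, X *m A *m X = X,
      ctmx (A *m X) = A *m X & ctmx (X *m A) = X *m A].

(* T = sum_i u_i^{(x)3}, u_i = i-th row of U *)
Definition cube_sum (r n : nat) (U : 'M[C]_(r, n)) : tensor3 C n :=
  fun a b c => \sum_(i < r) U i a * U i b * U i c.

Definition is_rdecomp (r n : nat) (T : tensor3 C n) (U : 'M[C]_(r, n)) : Prop :=
  row_free U /\ forall a b c, T a b c = cube_sum U a b c.

Definition r_diagonalisable (r n : nat) (T : tensor3 C n) : Prop :=
  exists U : 'M[C]_(r, n), is_rdecomp T U.

Definition diagonalisable (n : nat) (T : tensor3 C n) : Prop :=
  r_diagonalisable n T.

Definition tmul3 (n r : nat) (A : 'M[C]_(n, r)) (T : tensor3 C n) : tensor3 C r :=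
  fun i1 i2 i3 => \sum_(j1 < n) \sum_(j2 < n) \sum_(j3 < n)
    A j1 i1 * A j2 i2 * A j3 i3 * T j1 j2 j3.

(* kappa computed from a decomposition U and its pseudoinverse X *)
Definition kappa_of (r n : nat) (U : 'M[C]_(r, n)) (X : 'M[C]_(n, r)) : C :=
  frob2 U + frob2 X.

End Defs.

From mathcomp Require Import all_boot all_algebra.
From mathcomp Require Import reals ring.
From mathcomp.real_closed Require Import complex.
Import GRing.Theory Num.Theory.
Local Open Scope ring_scope.
Set Implicit Arguments.
Unset Strict Implicit.
Unset Printing Implicit Defensive.

(* Since the rows of U lie in the row space of P^T, on which P^T is an isometry,
   U = B P^T with B := U conj(P) square and invertible.  Hence T' is the sum of
   the cubes of the rows of B, and U^+ = conj(P) B^-1.  Any other diagonalising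
   decomposition U' of T' is V B with V unitary, because an invertible V whose
   rows have cubes summing to the identity tensor is a permutation matrix with
   cube roots of unity as entries.  Multiplying by isometries preserves the
   Frobenius norm, so kappa(T) and kappa(T') both equal |B|^2 + |B^-1|^2. *)

Section Tensors.
Variable C : numClosedFieldType.
Implicit Types m n p r : nat.

Lemma ctmx_mul m n p (A : 'M[C]_(m, n)) (B : 'M[C]_(n, p)) :
  ctmx (A *m B) = ctmx B *m ctmx A.
Proof. by rewrite /ctmx map_mxM trmx_mul. Qed.

Lemma ctmxK m n (A : 'M[C]_(m, n)) : ctmx (ctmx A) = A.
Proof. by apply/matrixP => i j; rewrite !mxE conjCK. Qed.

Lemma ctmx1 n : ctmx (1%:M : 'M[C]_n) = 1%:M.
Proof. by apply/matrixP => i j; rewrite !mxE rmorph_nat eq_sym. Qed.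

Lemma ctmx_tr m n (A : 'M[C]_(m, n)) : ctmx A^T = map_mx Num.conj A.
Proof. by apply/matrixP => i j; rewrite !mxE. Qed.

Lemma is_pinv_uniq m n (A : 'M[C]_(m, n)) X1 X2 :
  is_pinv A X1 -> is_pinv A X2 -> X1 = X2.
Proof.
case=> AX1A X1AX1 hX1A hAX1 [AX2A X2AX2 hX2A hAX2].
have AX2 : ctmx A = ctmx A *m A *m X2 by rewrite -{1}AX2A ctmx_mul hX2A mulmxA.
have X1A : ctmx A = X1 *m A *m ctmx A by rewrite -{1}AX1A -mulmxA ctmx_mul hAX1.
have -> : X1 = X1 *m A *m X2.
  rewrite -{1}X1AX1 -mulmxA -hX1A ctmx_mul AX2 !mulmxA.
  by rewrite -[X1 *m ctmx X1 *m ctmx A]mulmxA -ctmx_mul hX1A mulmxA X1AX1.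
rewrite -{2}X2AX2 -hAX2 ctmx_mul X1A.
rewrite -[X1 *m A *m ctmx A *m ctmx X2]mulmxA -ctmx_mul hAX2.
by rewrite -!mulmxA [X2 *m (A *m X2)]mulmxA X2AX2.
Qed.

Lemma is_pinv_rinv m n (A : 'M[C]_(m, n)) X :
  A *m X = 1%:M -> ctmx (X *m A) = X *m A -> is_pinv A X.
Proof.
move=> AX hXA; split => //; first by rewrite AX mul1mx.
  by rewrite -mulmxA AX mulmx1.
by rewrite AX ctmx1.
Qed.

Lemma is_pinv_coisometry m n (B : 'M[C]_m) (Y : 'M[C]_(m, n)) :
  B \in unitmx -> Y *m ctmx Y = 1%:M -> is_pinv (B *m Y) (ctmx Y *m invmx B).
Proof.
move=> Bu YY; apply: is_pinv_rinv.
  by rewrite mulmxA -(mulmxA B) YY mulmx1 mulmxV.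
by rewrite mulmxA -(mulmxA (ctmx Y)) mulVmx // mulmx1 ctmx_mul ctmxK.
Qed.

Lemma is_pinv_unitary m (V B : 'M[C]_m) :
  B \in unitmx -> V *m ctmx V = 1%:M -> is_pinv (V *m B) (invmx B *m ctmx V).
Proof.
move=> Bu VV; apply: is_pinv_rinv.
  by rewrite mulmxA -(mulmxA V) mulmxV // mulmx1.
rewrite mulmxA -(mulmxA (invmx B)) (mulmx1C VV) mulmx1 mulVmx //.
by rewrite ctmx1.
Qed.

Lemma frob2_tr m n (A : 'M[C]_(m, n)) : frob2 A = \tr (A *m ctmx A).
Proof.
rewrite /frob2 /mxtrace; apply: eq_bigr => i _; rewrite mxE.
by apply: eq_bigr => j _; rewrite !mxE normCK.
Qed.

Lemma frob2_mulmx_coisometry m n p (A : 'M[C]_(m, n)) (Y : 'M[C]_(n, p)) :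
  Y *m ctmx Y = 1%:M -> frob2 (A *m Y) = frob2 A.
Proof. by move=> YY; rewrite !frob2_tr ctmx_mul mulmxA -(mulmxA A) YY mulmx1. Qed.

Lemma frob2_isometry_mulmx m n p (Z : 'M[C]_(p, m)) (A : 'M[C]_(m, n)) :
  ctmx Z *m Z = 1%:M -> frob2 (Z *m A) = frob2 A.
Proof.
move=> ZZ; rewrite !frob2_tr ctmx_mul mxtrace_mulC !mulmxA -(mulmxA (ctmx A)) ZZ.
by rewrite mulmx1 mxtrace_mulC.
Qed.

Lemma kappa_of_coisometry m n p (A : 'M[C]_(m, n)) (X : 'M[C]_(n, m))
    (Y : 'M[C]_(n, p)) :
  Y *m ctmx Y = 1%:M -> kappa_of (A *m Y) (ctmx Y *m X) = kappa_of A X.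
Proof.
move=> YY; rewrite /kappa_of frob2_mulmx_coisometry // frob2_isometry_mulmx //.
by rewrite ctmxK.
Qed.

Lemma kappa_of_isometry m n p (A : 'M[C]_(m, n)) (X : 'M[C]_(n, m))
    (Z : 'M[C]_(p, m)) :
  ctmx Z *m Z = 1%:M -> kappa_of (Z *m A) (X *m ctmx Z) = kappa_of A X.
Proof.
move=> ZZ; rewrite /kappa_of frob2_isometry_mulmx // frob2_mulmx_coisometry //.
by rewrite ctmxK.
Qed.

Lemma eq_tmul3 n r (A : 'M[C]_(n, r)) (T S : tensor3 C n) :
  (forall a b c, T a b c = S a b c) ->
  forall a b c, tmul3 A T a b c = tmul3 A S a b c.
Proof.
move=> eqTS a b c; apply: eq_bigr => j1 _; apply: eq_bigr => j2 _.
by apply: eq_bigr => j3 _; rewrite eqTS.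
Qed.

Lemma cube_sum_mulmx r n p (U : 'M[C]_(r, n)) (M : 'M[C]_(n, p)) a b c :
  cube_sum (U *m M) a b c = tmul3 M (cube_sum U) a b c.
Proof.
rewrite /cube_sum /tmul3; symmetry.
under eq_bigr => j1 _ do under eq_bigr => j2 _ do under eq_bigr => j3 _ do
  rewrite mulr_sumr.
under eq_bigr => j1 _ do under eq_bigr => j2 _ do rewrite exchange_big.
under eq_bigr => j1 _ do rewrite exchange_big.
rewrite exchange_big; symmetry; apply: eq_bigr => i _ /=.
rewrite !mxE !mulr_suml; apply: eq_bigr => j1 _.
rewrite mulr_sumr [RHS]exchange_big; apply: eq_bigr => j3 _.
rewrite mulr_sumr mulr_suml; apply: eq_bigr => j2 _.
ring.
Qed.

Lemma cube_sum1 n (a b c : 'I_n) :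
  cube_sum (1%:M : 'M[C]_n) a b c = ((a == b) && (a == c))%:R.
Proof.
rewrite /cube_sum (bigD1 a) //= big1 => [|i ia]; last by rewrite !mxE (negbTE ia) !mul0r.
by rewrite !mxE eqxx mul1r -natrM mulnb addrC add0r.
Qed.

(* Contracting the identity tensor against V^-1 shows that V^-1 is the entrywise
   square of V^T and that distinct rows of V have disjoint supports; each
   nonzero entry x then satisfies x^4 = x, so it is a cube root of unity. *)
Section CubeSumIdentity.
Variables (r : nat) (V : 'M[C]_r).
Hypothesis V_unit : V \in unitmx.
Hypothesis cubeV : forall a b c, cube_sum V a b c = cube_sum 1%:M a b c.
Let W := invmx V.

Let mulVW k l : \sum_b V k b * W b l = (k == l)%:R.
Proof. by have /matrixP/(_ k l) := mulmxV V_unit; rewrite !mxE. Qed.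

Lemma cube_sum_id_mul_row k b c : V k b * V k c = (b == c)%:R * W b k.
Proof.
have -> : V k b * V k c = \sum_a W a k * cube_sum V a b c.
  have -> : \sum_a W a k * cube_sum V a b c
          = \sum_i (\sum_a V i a * W a k) * (V i b * V i c).
    rewrite /cube_sum; under eq_bigr do rewrite mulr_sumr.
    rewrite exchange_big; apply: eq_bigr => i _; rewrite mulr_suml.
    by apply: eq_bigr => a _; ring.
  under eq_bigr do rewrite mulVW.
  rewrite (bigD1 k) //= big1 => [|i ik]; last by rewrite (negbTE ik) mul0r.
  by rewrite eqxx mul1r addr0.
under eq_bigr do rewrite cubeV cube_sum1.
rewrite (bigD1 b) //= big1 => [|a ab]; last by rewrite (negbTE ab) mulr0.
by rewrite eqxx addr0 mulrC.
Qed.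

Lemma cube_sum_id_invmx b k : W b k = V k b ^+ 2.
Proof. by rewrite expr2 cube_sum_id_mul_row eqxx mul1r. Qed.

Lemma cube_sum_id_mul_col k l c : V k c ^+ 2 * V l c ^+ 2 = (k == l)%:R * V k c.
Proof.
rewrite -mulVW mulr_suml (bigD1 c) //= big1 => [|b bc]; last first.
  by rewrite mulrAC cube_sum_id_mul_row (negbTE bc) !mul0r.
by rewrite addr0 [RHS]mulrAC cube_sum_id_mul_row eqxx mul1r !cube_sum_id_invmx.
Qed.

Lemma cube_sum_id_col_disjoint k l c : k != l -> V k c * V l c = 0.
Proof.
move=> kl; have /eqP := cube_sum_id_mul_col k l c.
by rewrite (negbTE kl) mul0r -exprMn expf_eq0 /= => /eqP.
Qed.

Lemma cube_sum_id_normCK k c : `|V k c| ^+ 2 = V k c ^+ 3.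
Proof.
have x4 : V k c ^+ 3 * V k c = 1 * V k c.
  by rewrite -exprSr; have := cube_sum_id_mul_col k k c; rewrite eqxx -exprD.
have [->|nz] := eqVneq (V k c) 0; first by rewrite normr0 !expr0n.
have x3 : V k c ^+ 3 = 1 by apply: (mulIf nz).
have : `|V k c| ^+ 3 == 1 by rewrite -normrX x3 normr1.
by rewrite pexpr_eq1 // x3 => /eqP ->; rewrite expr1n.
Qed.

Lemma cube_sum_id_unitary : V *m ctmx V = 1%:M.
Proof.
apply/matrixP => k l; rewrite !mxE.
have [<-|kl] := eqVneq k l.
  transitivity (\sum_c V k c * W c k); last by rewrite mulVW eqxx.
  apply: eq_bigr => c _.
  by rewrite !mxE -normCK cube_sum_id_normCK cube_sum_id_invmx -exprS.
apply: big1 => c _; rewrite !mxE.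
have /eqP := cube_sum_id_col_disjoint c kl.
by rewrite mulf_eq0 => /orP[] /eqP ->; rewrite ?mul0r ?conjC0 ?mulr0.
Qed.

End CubeSumIdentity.

Lemma cube_sum_eq_unitary r (A B : 'M[C]_r) :
  A \in unitmx -> B \in unitmx ->
  (forall a b c, cube_sum A a b c = cube_sum B a b c) ->
  (A *m invmx B) *m ctmx (A *m invmx B) = 1%:M.
Proof.
move=> Au Bu eqAB; apply: cube_sum_id_unitary.
  by rewrite unitmx_mul Au unitmx_inv.
move=> a b c; rewrite -(mulmxV Bu) !cube_sum_mulmx.
exact: eq_tmul3.
Qed.

Lemma submx_coisometryK m n p (U : 'M[C]_(m, n)) (Y : 'M[C]_(p, n)) :
  (U <= Y)%MS -> Y *m ctmx Y = 1%:M -> U *m ctmx Y *m Y = U.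
Proof.
move=> sUY YY; have UY := mulmxKpV sUY.
by rewrite -{1}UY -(mulmxA _ Y) YY mulmx1 UY.
Qed.

Lemma row_free_mulmx_unit m n (B : 'M[C]_m) (Y : 'M[C]_(m, n)) :
  row_free (B *m Y) -> B \in unitmx.
Proof.
rewrite -row_free_unit -!row_leq_rank => freeBY.
exact: leq_trans freeBY (mxrankM_maxl B Y).
Qed.

End Tensors.

Theorem theorem5p4 (R : realType) (n r : nat)
    (T : tensor3 R[i] n) (U : 'M[R[i]]_(r, n)) (P : 'M[R[i]]_(n, r)) :
  is_rdecomp T U ->
  ctmx P *m P = 1%:M ->
  (P^T :=: U)%MS ->
  let T' := tmul3 (map_mx Num.conj P) T in
  diagonalisable T' /\
  (forall (X : 'M[R[i]]_(n, r)) (U' : 'M[R[i]]_(r, r)) (X' : 'M[R[i]]_(r, r)),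
     is_pinv U X -> is_rdecomp T' U' -> is_pinv U' X' ->
     kappa_of U X = kappa_of U' X').
Proof.
move=> [Ufree HT] PP eqPU T'.
have YY : P^T *m ctmx P^T = 1%:M.
  by rewrite ctmx_tr -(trmxK (map_mx _ _)) -trmx_mul PP trmx1.
set B := U *m ctmx P^T.
have UB : B *m P^T = U by apply: submx_coisometryK; rewrite // eqPU.
have Bu : B \in unitmx by apply: (row_free_mulmx_unit (Y := P^T)); rewrite UB.
have T'B a b c : T' a b c = cube_sum B a b c.
  by rewrite /B ctmx_tr cube_sum_mulmx; apply: eq_tmul3.
split; first by exists B; split; rewrite ?row_free_unit.
move=> X U' X' pinvX [U'free HU'] pinvX'.
have U'u : U' \in unitmx by rewrite -row_free_unit.
set V := U' *m invmx B.
have VV : V *m ctmx V = 1%:M.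
  by apply: cube_sum_eq_unitary => // a b c; rewrite -HU' T'B.
have U'VB : V *m B = U' by rewrite mulmxKV.
rewrite -UB in pinvX; rewrite -U'VB in pinvX'.
rewrite -(is_pinv_uniq (is_pinv_coisometry Bu YY) pinvX) -UB.
rewrite -(is_pinv_uniq (is_pinv_unitary Bu VV) pinvX') -U'VB.
by rewrite kappa_of_coisometry // kappa_of_isometry // mulmx1C.
Qed.
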